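(* Let $b_1,b_2,b_3\in\mathbb{R}$ with $b_1b_2b_3\neq 0$, let $C^b(x)=-\frac{b_3}{2b_1}x_1^2+x_3$ and $H^b(x)=\frac{b_1}{2}\big(x_2^2-\frac{b_2}{b_3}x_3^2\big)$, and for $\alpha,\beta,\gamma,\delta\in\mathbb{R}$ put $$C^b_{\alpha\beta}=\alpha C^b+\beta H^b=-\frac{\alpha b_3}{2b_1}x_1^2+\frac{\beta b_1}{2}x_2^2+\alpha x_3-\frac{\beta b_1b_2}{2b_3}x_3^2,\qquad H^b_{\gamma\delta}=\gamma C^b+\delta H^b,$$ and $$\{f,g\}^b_{\alpha\beta}=\det\begin{pmatrix}-\frac{\alpha b_3}{b_1}x_1 & \beta b_1x_2 & \alpha-\frac{\beta b_1b_2}{b_3}x_3\\[2pt] \frac{\partial f}{\partial x_1}&\frac{\partial f}{\partial x_2}&\frac{\partial f}{\partial x_3}\\[2pt] \frac{\partial g}{\partial x_1}&\frac{\partial g}{\partial x_2}&\frac{\partial g}{\partial x_3}\end{pmatrix},\qquad f,g\in C^\infty(\mathbb{R}^3,\mathbb{R}).$$ Then for every matrix $\begin{pmatrix}\alpha&\beta\\ \gamma&\delta\end{pmatrix}\in SL(2;\mathbb{R})$: (i) $(\mathbb{R}^3,\{\cdot,\cdot\}^b_{\alpha\beta},H^b_{\gamma\delta})$ is a Hamilton-Poisson realization of the system $$\dot x_1=b_1x_2,\qquad \dot x_2=b_2x_1x_3,\qquad \dot x_3=b_3x_1x_2,$$ i.e. $\{\cdot,\cdot\}^b_{\alpha\beta}$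 is a Poisson bracket and $\dot x_i=\{x_i,H^b_{\gamma\delta}\}^b_{\alpha\beta}$ for $i=1,2,3$; thus the system admits a family of Hamilton-Poisson realizations parametrized by $SL(2;\mathbb{R})$; (ii) $C^b_{\alpha\beta}$ is a Casimir of $(\mathbb{R}^3,\{\cdot,\cdot\}^b_{\alpha\beta})$, i.e. $\{C^b_{\alpha\beta},f\}^b_{\alpha\beta}=0$ for all $f\in C^\infty(\mathbb{R}^3,\mathbb{R})$. *)

From Stdlib Require Import Reals List.
From Coquelicot Require Import Coquelicot.
Open Scope R_scope.

Definition pt : Type := (R * R * R)%type.
Definition x1 (p : pt) : R := fst (fst p).
Definition x2 (p : pt) : R := snd (fst p).
Definition x3 (p : pt) : R := snd p.

Inductive dir : Type := D1 | D2 | D3.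

Definition coord (d : dir) (p : pt) : R :=
  match d with D1 => x1 p | D2 => x2 p | D3 => x3 p end.

Definition upd (p : pt) (d : dir) (t : R) : pt :=
  match d with
  | D1 => (t, x2 p, x3 p)
  | D2 => (x1 p, t, x3 p)
  | D3 => (x1 p, x2 p, t)
  end.

Definition pd (d : dir) (f : pt -> R) : pt -> R :=
  fun p => Derive (fun t => f (upd p d t)) (coord d p).

Definition ipd (l : list dir) (f : pt -> R) : pt -> R := fold_right pd f l.

(* C^infinity(R^3,R): all iterated partial derivatives of all orders exist
   everywhere and are continuous on R^3. *)
Definition smooth (f : pt -> R) : Prop :=
  forall l : list dir,
    (forall p : pt, continuous (ipd l f) p) /\
    (forall (d : dir) (p : pt), ex_derive (fun t => ipd l f (upd p d t)) (coord d p)).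

Definition bracket (b1 b2 b3 al be : R) (f g : pt -> R) : pt -> R :=
  fun p =>
    let a1 := - (al * b3 / b1) * x1 p in
    let a2 := be * b1 * x2 p in
    let a3 := al - (be * b1 * b2 / b3) * x3 p in
    let u1 := pd D1 f p in let u2 := pd D2 f p in let u3 := pd D3 f p in
    let v1 := pd D1 g p in let v2 := pd D2 g p in let v3 := pd D3 g p in
    a1 * (u2 * v3 - u3 * v2) - a2 * (u1 * v3 - u3 * v1) + a3 * (u1 * v2 - u2 * v1).

Definition is_Poisson_bracket (br : (pt -> R) -> (pt -> R) -> (pt -> R)) : Prop :=
  (forall f g, smooth f -> smooth g -> smooth (br f g)) /\
  (forall (a c : R) f g h, smooth f -> smooth g -> smooth h ->
     forall p, br (fun q => a * f q + c * g q) h p = a * br f h p + c * br g h p) /\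
  (forall (a c : R) f g h, smooth f -> smooth g -> smooth h ->
     forall p, br h (fun q => a * f q + c * g q) p = a * br h f p + c * br h g p) /\
  (forall f g, smooth f -> smooth g -> forall p, br f g p = - br g f p) /\
  (forall f g h, smooth f -> smooth g -> smooth h ->
     forall p, br f (fun q => g q * h q) p = br f g p * h p + g p * br f h p) /\
  (forall f g h, smooth f -> smooth g -> smooth h ->
     forall p, br f (br g h) p + br g (br h f) p + br h (br f g) p = 0).

Definition Cb (b1 b2 b3 : R) (p : pt) : R := - (b3 / (2 * b1)) * (x1 p) ^ 2 + x3 p.
Definition Hb (b1 b2 b3 : R) (p : pt) : R :=
  (b1 / 2) * ((x2 p) ^ 2 - (b2 / b3) * (x3 p) ^ 2).

Definition comb (b1 b2 b3 al be : R) (p : pt) : R :=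
  al * Cb b1 b2 b3 p + be * Hb b1 b2 b3 p.

Definition field (b1 b2 b3 : R) (d : dir) (p : pt) : R :=
  match d with
  | D1 => b1 * x2 p
  | D2 => b2 * x1 p * x3 p
  | D3 => b3 * x1 p * x2 p
  end.

Definition HP_realization (br : (pt -> R) -> (pt -> R) -> (pt -> R))
  (H : pt -> R) (X : dir -> pt -> R) : Prop :=
  is_Poisson_bracket br /\ smooth H /\
  forall (d : dir) (p : pt), X d p = br (coord d) H p.

Definition is_Casimir (br : (pt -> R) -> (pt -> R) -> (pt -> R)) (C : pt -> R) : Prop :=
  smooth C /\ forall f, smooth f -> forall p, br C f p = 0.

(* The bracket is the Nambu bracket {f,g} = grad C . (grad f x grad g) of the
   function C = alpha C^b + beta H^b, whose gradient is the first row of the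
   determinant.  For any smooth C such a bracket is bilinear, antisymmetric and a
   derivation; after differentiating the inner brackets, the Jacobi identity is a
   polynomial identity in the first and second partials of C, f, g, h once the
   mixed partials are identified (Schwarz).  C is a Casimir because the
   determinant then has two equal rows, and {x_i, gamma C^b + delta H^b} is
   (alpha delta - beta gamma) times the vector field. *)
From Stdlib Require Import Reals List FunctionalExtensionality Lia.
From Coquelicot Require Import Coquelicot.
Open Scope R_scope.

Lemma dir_eq_dec (d e : dir) : {d = e} + {d <> e}.
Proof. decide equality. Defined.

Lemma upd_coord p d : upd p d (coord d p) = p.
Proof. now destruct p as [[a b] c], d. Qed.

Definition ex_pd (d : dir) (f : pt -> R) (p : pt) : Prop :=
  ex_derive (fun t => f (upd p d t)) (coord d p).

Lemma pd_plus d f g p : ex_pd d f p -> ex_pd d g p ->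
  pd d (fun q => f q + g q) p = pd d f p + pd d g p.
Proof. exact (Derive_plus _ _ _). Qed.

Lemma pd_scal d a f p : pd d (fun q => a * f q) p = a * pd d f p.
Proof. exact (Derive_scal _ _ _). Qed.

Lemma pd_mult d f g p : ex_pd d f p -> ex_pd d g p ->
  pd d (fun q => f q * g q) p = pd d f p * g p + f p * pd d g p.
Proof.
  intros Hf Hg; unfold pd.
  rewrite (Derive_mult (fun t => f (upd p d t)) (fun t => g (upd p d t))) by assumption.
  now rewrite upd_coord.
Qed.

Lemma pd_lin d a c f g p : ex_pd d f p -> ex_pd d g p ->
  pd d (fun q => a * f q + c * g q) p = a * pd d f p + c * pd d g p.
Proof.
  intros Hf Hg; rewrite pd_plus, !pd_scal; trivial; now apply ex_derive_scal.
Qed.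

Lemma pd_const d c : pd d (fun _ => c) = fun _ => 0.
Proof. extensionality p; apply (Derive_const c). Qed.

Lemma pd_coord_same d p : pd d (coord d) p = 1.
Proof. destruct p as [[a b] c], d; apply Derive_id. Qed.

Lemma pd_coord_other d e p : d <> e -> pd d (coord e) p = 0.
Proof.
  intros Hde; destruct p as [[a b] c], d, e; try congruence;
    cbv [pd coord upd x1 x2 x3 fst snd]; apply Derive_const.
Qed.

Lemma ex_pd_coord d e p : ex_pd d (coord e) p.
Proof.
  destruct p as [[a b] c], d, e; cbv [ex_pd coord upd x1 x2 x3 fst snd];
    first [exact (ex_derive_id _) | exact (ex_derive_const _ _)].
Qed.

Lemma continuous_coord e p : continuous (coord e) p.
Proof.
  destruct p as [[a b] c], e.
  - exact (continuous_comp fst fst _ (continuous_fst _ _) (continuous_fst _ _)).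
  - exact (continuous_comp fst snd _ (continuous_fst _ _) (continuous_snd _ _)).
  - exact (continuous_snd _ _).
Qed.

Definition cont_with_partials (f : pt -> R) : Prop :=
  (forall p, continuous f p) /\ (forall d p, ex_pd d f p).

Lemma cont_with_partials_const c : cont_with_partials (fun _ => c).
Proof. split; intros; [apply continuous_const | exact (ex_derive_const c _)]. Qed.

Lemma cont_with_partials_coord e : cont_with_partials (coord e).
Proof. split; intros; [apply continuous_coord | apply ex_pd_coord]. Qed.

Lemma cont_with_partials_plus f g : cont_with_partials f -> cont_with_partials g ->
  cont_with_partials (fun q => f q + g q).
Proof.
  intros [Cf Df] [Cg Dg]; split; intros.
  - apply (continuous_plus f g); [apply Cf | apply Cg].
  - apply (ex_derive_plus (fun t => f (upd p d t)) (fun t => g (upd p d t)));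
      [apply Df | apply Dg].
Qed.

Lemma cont_with_partials_mult f g : cont_with_partials f -> cont_with_partials g ->
  cont_with_partials (fun q => f q * g q).
Proof.
  intros [Cf Df] [Cg Dg]; split; intros.
  - apply (continuous_mult f g); [apply Cf | apply Cg].
  - apply (ex_derive_mult (fun t => f (upd p d t)) (fun t => g (upd p d t)));
      [apply Df | apply Dg].
Qed.

Definition smooth_ord (n : nat) (f : pt -> R) : Prop :=
  forall l, (length l <= n)%nat -> cont_with_partials (ipd l f).

Lemma smoothE f : smooth f <-> forall n, smooth_ord n f.
Proof.
  split; [intros Hf n l _; apply Hf | intros Hf l; exact (Hf (length l) l (le_n _))].
Qed.

Lemma smooth_ord_S n f : smooth_ord (S n) f -> smooth_ord n f.
Proof. intros Hf l Hl; apply Hf; lia. Qed.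

Lemma smooth_ord_cwp n f : smooth_ord n f -> cont_with_partials f.
Proof. intros Hf; apply (Hf nil); simpl; lia. Qed.

Lemma smooth_ord_0 f : cont_with_partials f -> smooth_ord 0 f.
Proof. intros Hf [|d l] Hl; [exact Hf | simpl in Hl; lia]. Qed.

Lemma ipd_app l1 l2 f : ipd (l1 ++ l2) f = ipd l1 (ipd l2 f).
Proof. apply fold_right_app. Qed.

Lemma smooth_ord_pd n d f : smooth_ord (S n) f -> smooth_ord n (pd d f).
Proof.
  intros Hf l Hl; change (pd d f) with (ipd (d :: nil) f); rewrite <- ipd_app.
  apply Hf; rewrite length_app; simpl; lia.
Qed.

Lemma smooth_ord_of_pd n f : cont_with_partials f -> (forall d, smooth_ord n (pd d f)) ->
  smooth_ord (S n) f.
Proof.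
  intros Hf Hpd [|d0 l0] Hl; [exact Hf|].
  destruct (exists_last (l := d0 :: l0) ltac:(discriminate)) as [l [d E]].
  rewrite E in Hl |- *; rewrite length_app in Hl; simpl in Hl.
  rewrite ipd_app; apply Hpd; lia.
Qed.

Lemma smooth_ord_const n c : smooth_ord n (fun _ => c).
Proof.
  revert c; induction n as [|n IH]; intro c.
  - apply smooth_ord_0, cont_with_partials_const.
  - apply smooth_ord_of_pd; [apply cont_with_partials_const|].
    intro d; rewrite pd_const; apply IH.
Qed.

Lemma smooth_ord_plus n f g : smooth_ord n f -> smooth_ord n g ->
  smooth_ord n (fun q => f q + g q).
Proof.
  revert f g; induction n as [|n IH]; intros f g Hf Hg.
  - apply smooth_ord_0, cont_with_partials_plus; eapply smooth_ord_cwp; eassumption.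
  - apply smooth_ord_of_pd.
    { apply cont_with_partials_plus; eapply smooth_ord_cwp; eassumption. }
    intro d.
    replace (pd d (fun q => f q + g q)) with (fun q => pd d f q + pd d g q).
    + apply IH; now apply smooth_ord_pd.
    + extensionality p; symmetry; apply pd_plus;
        [apply (smooth_ord_cwp _ _ Hf) | apply (smooth_ord_cwp _ _ Hg)].
Qed.

Lemma smooth_ord_mult n f g : smooth_ord n f -> smooth_ord n g ->
  smooth_ord n (fun q => f q * g q).
Proof.
  revert f g; induction n as [|n IH]; intros f g Hf Hg.
  - apply smooth_ord_0, cont_with_partials_mult; eapply smooth_ord_cwp; eassumption.
  - apply smooth_ord_of_pd.
    { apply cont_with_partials_mult; eapply smooth_ord_cwp; eassumption. }
    intro d.
    replace (pd d (fun q => f q * g q)) with (fun q => pd d f q * g q + f q * pd d g q).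
    + apply smooth_ord_plus; apply IH; auto using smooth_ord_pd, smooth_ord_S.
    + extensionality p; symmetry; apply pd_mult;
        [apply (smooth_ord_cwp _ _ Hf) | apply (smooth_ord_cwp _ _ Hg)].
Qed.

Lemma smooth_const c : smooth (fun _ => c).
Proof. apply smoothE; intro; apply smooth_ord_const. Qed.

Lemma smooth_plus f g : smooth f -> smooth g -> smooth (fun q => f q + g q).
Proof. rewrite !smoothE; intros; now apply smooth_ord_plus. Qed.

Lemma smooth_mult f g : smooth f -> smooth g -> smooth (fun q => f q * g q).
Proof. rewrite !smoothE; intros; now apply smooth_ord_mult. Qed.

Lemma smooth_minus f g : smooth f -> smooth g -> smooth (fun q => f q - g q).
Proof.
  intros Hf Hg; replace (fun q => f q - g q) with (fun q => f q + (-1) * g q).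
  - auto using smooth_plus, smooth_mult, smooth_const.
  - extensionality q; ring.
Qed.

Lemma smooth_pow f n : smooth f -> smooth (fun q => f q ^ n).
Proof. intros Hf; induction n; [exact (smooth_const 1) | now apply smooth_mult]. Qed.

Lemma smooth_pd d f : smooth f -> smooth (pd d f).
Proof. rewrite !smoothE; intros Hf n; apply smooth_ord_pd, Hf. Qed.

Lemma smooth_coord e : smooth (coord e).
Proof.
  apply smoothE; intros [|n].
  - apply smooth_ord_0, cont_with_partials_coord.
  - apply smooth_ord_of_pd; [apply cont_with_partials_coord|]; intro d.
    destruct (dir_eq_dec d e) as [<-|Hde].
    + replace (pd d (coord d)) with (fun _ : pt => 1)
        by (extensionality p; now rewrite pd_coord_same).
      apply smooth_ord_const.
    + replace (pd d (coord e)) with (fun _ : pt => 0)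
        by (extensionality p; now rewrite pd_coord_other).
      apply smooth_ord_const.
Qed.

Definition slice (p : pt) (d e : dir) (u v : R) : pt := upd (upd p d u) e v.

Section Slice.
Variables (p : pt) (d e : dir).
Hypothesis Hde : d <> e.

Lemma upd_slice_l u v z : upd (slice p d e u v) d z = slice p d e z v.
Proof. destruct p as [[a b] c], d, e; now try congruence. Qed.

Lemma upd_slice_r u v z : upd (slice p d e u v) e z = slice p d e u z.
Proof. destruct p as [[a b] c], d, e; now try congruence. Qed.

Lemma coord_slice_l u v : coord d (slice p d e u v) = u.
Proof. destruct p as [[a b] c], d, e; now try congruence. Qed.

Lemma coord_slice_r u v : coord e (slice p d e u v) = v.
Proof. destruct p as [[a b] c], d, e; now try congruence. Qed.

Lemma slice_coord : slice p d e (coord d p) (coord e p) = p.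
Proof. destruct p as [[a b] c], d, e; now try congruence. Qed.

Lemma ball_slice x y u v (eps : posreal) : Rabs (u - x) < eps -> Rabs (v - y) < eps ->
  ball (slice p d e x y) eps (slice p d e u v).
Proof.
  intros Hu Hv; destruct p as [[a b] c], d, e; try congruence;
    repeat split; first [assumption | apply ball_center].
Qed.

Lemma pd_slice_l F u v : pd d F (slice p d e u v) = Derive (fun z => F (slice p d e z v)) u.
Proof.
  unfold pd; rewrite coord_slice_l; apply Derive_ext; intro; now rewrite upd_slice_l.
Qed.

Lemma pd_slice_r F u v : pd e F (slice p d e u v) = Derive (fun z => F (slice p d e u z)) v.
Proof.
  unfold pd; rewrite coord_slice_r; apply Derive_ext; intro; now rewrite upd_slice_r.
Qed.

Lemma ex_pd_slice_l F u v :
  ex_pd d F (slice p d e u v) -> ex_derive (fun z => F (slice p d e z v)) u.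
Proof.
  unfold ex_pd; rewrite coord_slice_l; apply ex_derive_ext; intro; now rewrite upd_slice_l.
Qed.

Lemma ex_pd_slice_r F u v :
  ex_pd e F (slice p d e u v) -> ex_derive (fun z => F (slice p d e u z)) v.
Proof.
  unfold ex_pd; rewrite coord_slice_r; apply ex_derive_ext; intro; now rewrite upd_slice_r.
Qed.

Lemma pd_pd_slice_lr F u v : pd d (pd e F) (slice p d e u v) =
  Derive (fun z => Derive (fun t => F (slice p d e z t)) v) u.
Proof. rewrite pd_slice_l; apply Derive_ext; intro; apply pd_slice_r. Qed.

Lemma pd_pd_slice_rl F u v : pd e (pd d F) (slice p d e u v) =
  Derive (fun z => Derive (fun t => F (slice p d e t z)) u) v.
Proof. rewrite pd_slice_r; apply Derive_ext; intro; apply pd_slice_l. Qed.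

Lemma continuity_2d_slice F x y : continuous F (slice p d e x y) ->
  continuity_2d_pt (fun u v => F (slice p d e u v)) x y.
Proof.
  intros HF eps; apply filterlim_locally with (eps := eps) in HF.
  destruct HF as [delta Hdelta]; exists delta; intros u v Hu Hv.
  now apply (Hdelta (slice p d e u v)), ball_slice.
Qed.

Lemma pd_comm_slice G x y : smooth G ->
  pd d (pd e G) (slice p d e x y) = pd e (pd d G) (slice p d e x y).
Proof.
  intros HG; rewrite pd_pd_slice_lr, pd_pd_slice_rl.
  apply (Schwarz (fun u v => G (slice p d e u v))).
  - exists (mkposreal 1 Rlt_0_1); intros u v _ _.
    repeat split.
    + apply ex_pd_slice_l, (proj2 (HG nil)).
    + apply ex_pd_slice_r, (proj2 (HG nil)).
    + apply (ex_derive_ext (fun z => pd e G (slice p d e z v))); [intro; apply pd_slice_r|].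
      apply ex_pd_slice_l, (proj2 (HG (e :: nil))).
    + apply (ex_derive_ext (fun z => pd d G (slice p d e u z))); [intro; apply pd_slice_l|].
      apply ex_pd_slice_r, (proj2 (HG (d :: nil))).
  - apply (continuity_2d_pt_ext (fun u v => pd d (pd e G) (slice p d e u v))).
    { intros; apply pd_pd_slice_lr. }
    apply continuity_2d_slice, (proj1 (HG (d :: e :: nil))).
  - apply (continuity_2d_pt_ext (fun u v => pd e (pd d G) (slice p d e u v))).
    { intros; apply pd_pd_slice_rl. }
    apply continuity_2d_slice, (proj1 (HG (e :: d :: nil))).
Qed.

End Slice.

Lemma pd_comm d e G p : smooth G -> pd d (pd e G) p = pd e (pd d G) p.
Proof.
  intros HG; destruct (dir_eq_dec d e) as [<-|Hde]; [reflexivity|].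
  rewrite <- (slice_coord p d e Hde); now apply pd_comm_slice.
Qed.

Definition det3 (a1 a2 a3 u1 u2 u3 v1 v2 v3 : R) : R :=
  a1 * (u2 * v3 - u3 * v2) - a2 * (u1 * v3 - u3 * v1) + a3 * (u1 * v2 - u2 * v1).

Lemma is_derive_det3 (A1 A2 A3 U1 U2 U3 V1 V2 V3 : R -> R) t
  dA1 dA2 dA3 dU1 dU2 dU3 dV1 dV2 dV3 :
  is_derive A1 t dA1 -> is_derive A2 t dA2 -> is_derive A3 t dA3 ->
  is_derive U1 t dU1 -> is_derive U2 t dU2 -> is_derive U3 t dU3 ->
  is_derive V1 t dV1 -> is_derive V2 t dV2 -> is_derive V3 t dV3 ->
  is_derive (fun s => det3 (A1 s) (A2 s) (A3 s) (U1 s) (U2 s) (U3 s) (V1 s) (V2 s) (V3 s)) t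
    (det3 dA1 dA2 dA3 (U1 t) (U2 t) (U3 t) (V1 t) (V2 t) (V3 t)
     + det3 (A1 t) (A2 t) (A3 t) dU1 dU2 dU3 (V1 t) (V2 t) (V3 t)
     + det3 (A1 t) (A2 t) (A3 t) (U1 t) (U2 t) (U3 t) dV1 dV2 dV3).
Proof.
  intros HA1 HA2 HA3 HU1 HU2 HU3 HV1 HV2 HV3; unfold det3.
  auto_derive.
  - repeat split; eexists; eassumption.
  - assert (E : forall F dF, is_derive F t dF -> Derive (fun s => F s) t = dF)
      by exact (fun F dF HF => is_derive_unique F t dF HF).
    rewrite (E _ _ HA1), (E _ _ HA2), (E _ _ HA3), (E _ _ HU1), (E _ _ HU2),
      (E _ _ HU3), (E _ _ HV1), (E _ _ HV2), (E _ _ HV3).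
    ring.
Qed.

Definition nambu_bracket (C f g : pt -> R) (p : pt) : R :=
  det3 (pd D1 C p) (pd D2 C p) (pd D3 C p) (pd D1 f p) (pd D2 f p) (pd D3 f p)
       (pd D1 g p) (pd D2 g p) (pd D3 g p).

Lemma is_derive_pd d f p : smooth f ->
  is_derive (fun t => f (upd p d t)) (coord d p) (pd d f p).
Proof. intros Hf; apply Derive_correct, (proj2 (Hf nil)). Qed.

Lemma pd_nambu_bracket e C f g p : smooth C -> smooth f -> smooth g ->
  pd e (nambu_bracket C f g) p =
    det3 (pd e (pd D1 C) p) (pd e (pd D2 C) p) (pd e (pd D3 C) p)
         (pd D1 f p) (pd D2 f p) (pd D3 f p) (pd D1 g p) (pd D2 g p) (pd D3 g p)
  + det3 (pd D1 C p) (pd D2 C p) (pd D3 C p)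
         (pd e (pd D1 f) p) (pd e (pd D2 f) p) (pd e (pd D3 f) p)
         (pd D1 g p) (pd D2 g p) (pd D3 g p)
  + det3 (pd D1 C p) (pd D2 C p) (pd D3 C p) (pd D1 f p) (pd D2 f p) (pd D3 f p)
         (pd e (pd D1 g) p) (pd e (pd D2 g) p) (pd e (pd D3 g) p).
Proof.
  intros HC Hf Hg; apply is_derive_unique.
  pose proof (fun h d (Hh : smooth h) => is_derive_pd e (pd d h) p (smooth_pd d h Hh)) as D.
  pose proof (is_derive_det3 _ _ _ _ _ _ _ _ _ _ _ _ _ _ _ _ _ _ _
    (D C D1 HC) (D C D2 HC) (D C D3 HC) (D f D1 Hf) (D f D2 Hf) (D f D3 Hf)
    (D g D1 Hg) (D g D2 Hg) (D g D3 Hg)) as H.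
  cbv beta in H; now rewrite upd_coord in H.
Qed.

Lemma smooth_det3 (A1 A2 A3 U1 U2 U3 V1 V2 V3 : pt -> R) :
  smooth A1 -> smooth A2 -> smooth A3 -> smooth U1 -> smooth U2 -> smooth U3 ->
  smooth V1 -> smooth V2 -> smooth V3 ->
  smooth (fun q => det3 (A1 q) (A2 q) (A3 q) (U1 q) (U2 q) (U3 q) (V1 q) (V2 q) (V3 q)).
Proof.
  intros; unfold det3.
  apply smooth_plus; [apply smooth_minus|];
    apply smooth_mult; try assumption; apply smooth_minus; now apply smooth_mult.
Qed.

Lemma smooth_nambu_bracket C f g : smooth C -> smooth f -> smooth g ->
  smooth (nambu_bracket C f g).
Proof. intros; apply smooth_det3; now apply smooth_pd. Qed.

Lemma nambu_bracket_jacobi C f g h p : smooth C -> smooth f -> smooth g -> smooth h ->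
  nambu_bracket C f (nambu_bracket C g h) p + nambu_bracket C g (nambu_bracket C h f) p
  + nambu_bracket C h (nambu_bracket C f g) p = 0.
Proof.
  intros HC Hf Hg Hh; unfold nambu_bracket at 1 3 5.
  rewrite !pd_nambu_bracket by assumption.
  rewrite !(pd_comm D2 D1 C p HC), !(pd_comm D3 D1 C p HC), !(pd_comm D3 D2 C p HC),
    !(pd_comm D2 D1 f p Hf), !(pd_comm D3 D1 f p Hf), !(pd_comm D3 D2 f p Hf),
    !(pd_comm D2 D1 g p Hg), !(pd_comm D3 D1 g p Hg), !(pd_comm D3 D2 g p Hg),
    !(pd_comm D2 D1 h p Hh), !(pd_comm D3 D1 h p Hh), !(pd_comm D3 D2 h p Hh).
  unfold nambu_bracket, det3; ring.
Qed.

Lemma smooth_ex_pd f d p : smooth f -> ex_pd d f p.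
Proof. intros Hf; exact (proj2 (Hf nil) d p). Qed.

Lemma nambu_bracket_Poisson C : smooth C -> is_Poisson_bracket (nambu_bracket C).
Proof.
  intros HC; refine (conj _ (conj _ (conj _ (conj _ (conj _ _))))).
  - intros; now apply smooth_nambu_bracket.
  - intros a c f g h Hf Hg Hh p; unfold nambu_bracket.
    rewrite !pd_lin by now apply smooth_ex_pd. unfold det3; ring.
  - intros a c f g h Hf Hg Hh p; unfold nambu_bracket.
    rewrite !pd_lin by now apply smooth_ex_pd. unfold det3; ring.
  - intros f g _ _ p; unfold nambu_bracket, det3; ring.
  - intros f g h Hf Hg Hh p; unfold nambu_bracket.
    rewrite !pd_mult by now apply smooth_ex_pd. unfold det3; ring.
  - intros; now apply nambu_bracket_jacobi.
Qed.

Lemma nambu_bracket_Casimir C : smooth C -> is_Casimir (nambu_bracket C) C.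
Proof. intros HC; split; [exact HC|]; intros f _ p; unfold nambu_bracket, det3; ring. Qed.

Section LinearCombination.
Variables (b1 b2 b3 a c : R).
Hypotheses (Hb1 : b1 <> 0) (Hb3 : b3 <> 0).

Lemma smooth_comb : smooth (comb b1 b2 b3 a c).
Proof.
  pose proof (fun d => smooth_pow (coord d) 2 (smooth_coord d)) as Hsq.
  assert (HC : smooth (Cb b1 b2 b3)).
  { apply smooth_plus; [apply smooth_mult; [apply smooth_const | exact (Hsq D1)]|].
    exact (smooth_coord D3). }
  assert (HH : smooth (Hb b1 b2 b3)).
  { apply smooth_mult; [apply smooth_const|].
    apply smooth_minus; [exact (Hsq D2)|].
    apply smooth_mult; [apply smooth_const | exact (Hsq D3)]. }
  apply smooth_plus; apply smooth_mult; auto using smooth_const.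
Qed.

Lemma pd_comb_1 p : pd D1 (comb b1 b2 b3 a c) p = - (a * b3 / b1) * x1 p.
Proof.
  destruct p as [[u v] w]; unfold pd, comb, Cb, Hb; cbv [x1 x2 x3 coord upd fst snd].
  apply is_derive_unique;
  auto_derive; [trivial | field; auto].
Qed.

Lemma pd_comb_2 p : pd D2 (comb b1 b2 b3 a c) p = c * b1 * x2 p.
Proof.
  destruct p as [[u v] w]; unfold pd, comb, Cb, Hb; cbv [x1 x2 x3 coord upd fst snd].
  apply is_derive_unique;
  auto_derive; [trivial | field; auto].
Qed.

Lemma pd_comb_3 p : pd D3 (comb b1 b2 b3 a c) p = a - (c * b1 * b2 / b3) * x3 p.
Proof.
  destruct p as [[u v] w]; unfold pd, comb, Cb, Hb; cbv [x1 x2 x3 coord upd fst snd].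
  apply is_derive_unique;
  auto_derive; [trivial | field; auto].
Qed.

Lemma bracket_nambu : bracket b1 b2 b3 a c = nambu_bracket (comb b1 b2 b3 a c).
Proof.
  extensionality f; extensionality g; extensionality p.
  unfold nambu_bracket; now rewrite pd_comb_1, pd_comb_2, pd_comb_3.
Qed.

End LinearCombination.

Lemma field_nambu_bracket b1 b2 b3 al be ga de d p : b1 <> 0 -> b3 <> 0 ->
  al * de - be * ga = 1 ->
  field b1 b2 b3 d p =
    nambu_bracket (comb b1 b2 b3 al be) (coord d) (comb b1 b2 b3 ga de) p.
Proof.
  intros Hb1 Hb3 HSL.
  transitivity (field b1 b2 b3 d p * (al * de - be * ga)); [rewrite HSL; ring|].
  unfold nambu_bracket; rewrite !pd_comb_1, !pd_comb_2, !pd_comb_3 by assumption.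
  destruct d; rewrite pd_coord_same, !pd_coord_other by discriminate;
    unfold field, det3; simpl; field; auto.
Qed.

Theorem proposition3p2 (b1 b2 b3 : R) (hb : b1 * b2 * b3 <> 0)
  (al be ga de : R) (hSL : al * de - be * ga = 1) :
  HP_realization (bracket b1 b2 b3 al be) (comb b1 b2 b3 ga de) (field b1 b2 b3) /\
  is_Casimir (bracket b1 b2 b3 al be) (comb b1 b2 b3 al be).
Proof.
  assert (Hb1 : b1 <> 0) by (intro E; apply hb; rewrite E; ring).
  assert (Hb3 : b3 <> 0) by (intro E; apply hb; rewrite E; ring).
  rewrite bracket_nambu by assumption.
  split; [split; [|split]|].
  - now apply nambu_bracket_Poisson, smooth_comb.
  - now apply smooth_comb.
  - intros d p; now apply field_nambu_bracket.
  - now apply nambu_bracket_Casimir, smooth_comb.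
Qed.
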